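(* Let $H_0$ be a bounded operator on a Hilbert space with $\|H_0\|=1$, finite-dimensional kernel, and a bounded reflexive generalized inverse $H_0^{(-1)}$; write $\varkappa=\varkappa(H_0,H_0^{(-1)})$. Let $w$ be bounded with $\|w\|=1$ and $0\le\lambda<1/(2\varkappa)$, and assume $\dim\mathrm{Ker}(H_0+\lambda w)=\dim\mathrm{Ker}\,H_0$. Then $$\sin\theta_{\max}(w,\lambda)\le\frac{\lambda\varkappa}{\sqrt{1-2\lambda\varkappa}}.$$ Consequently, if $\dim\mathrm{Ker}(H_0+\lambda w)=\dim\mathrm{Ker}H_0$ for all small $\lambda>0$, then $\limsup_{\lambda\to0^+}\theta_{\max}(w,\lambda)/\lambda\le\varkappa$; in particular the sensitivity satisfies $\mathcal{X}(w)\le\varkappa$ and $\mathcal{X}\le\varkappa$.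
   Context: A reflexive generalized inverse of $H_0$ is $H_0^{(-1)}$ with $H_0^{(-1)}H_0H_0^{(-1)}=H_0^{(-1)}$, $H_0H_0^{(-1)}H_0=H_0$; $\varkappa(H_0,H_0^{(-1)}):=\|H_0\|\|H_0^{(-1)}\|$. For closed subspaces, $P_{\mathcal{V}}$ denotes the orthogonal projector; the maximal angle $\theta_{\max}(w,\lambda)\in[0,\pi/2]$ is defined by $\sin\theta_{\max}(w,\lambda)=\|P_{\mathrm{Ker}(H_0+\lambda w)}-P_{\mathrm{Ker}H_0}\|$. The sensitivity to $w$ is $\mathcal{X}(w):=\frac{d}{d\lambda}\theta_{\max}(w,\lambda)|_{\lambda=0^+}$ (right derivative), and $\mathcal{X}:=\sup_{\|w\|=1}\mathcal{X}(w)$ over perturbations $w$ in a given symmetry class. *)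

From HB Require Import structures.
From mathcomp Require Import all_boot all_order all_algebra.
From mathcomp Require Import all_classical all_reals all_analysis.
Set Implicit Arguments. Unset Strict Implicit. Unset Printing Implicit Defensive.
Import Order.TTheory GRing.Theory Num.Theory.
Import numFieldNormedType.Exports.
Local Open Scope classical_set_scope.
Local Open Scope ring_scope.

Section HilbertDefs.
Variables (R : realType) (V : completeNormedModType R).

(* [ip] is an inner product on V inducing its norm: V is a real Hilbert space *)
Definition inner_product_of_norm (ip : V -> V -> R) : Prop :=
  [/\ forall x y, ip x y = ip y x,
      forall a x y z, ip (a *: x + y) z = a * ip x z + ip y z
    & forall x, ip x x = `|x| ^+ 2].

Definition lin_op (f : V -> V) : Prop :=
  forall a x y, f (a *: x + y) = a *: f x + f y.
Definition bounded_op (f : V -> V) : Prop :=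
  lin_op f /\ exists M : R, forall x, `|f x| <= M * `|x|.

Definition opnorm (f : V -> V) : R := sup [set `|f x| | x in [set x : V | `|x| <= 1]].

Definition Ker (f : V -> V) : set V := [set x | f x = 0].

Definition has_dim (S : set V) (n : nat) : Prop :=
  exists b : 'I_n -> V,
    (forall c : 'I_n -> R, \sum_(i < n) c i *: b i = 0 -> forall i, c i = 0) /\
    S = [set \sum_(i < n) c i *: b i | c in [set: 'I_n -> R]].

Definition finite_dim (S : set V) : Prop := exists n, has_dim S n.
Definition same_dim (S T : set V) : Prop := exists n, has_dim S n /\ has_dim T n.

Definition orth_proj (ip : V -> V -> R) (S : set V) (P : V -> V) : Prop :=
  (forall x, S (P x)) /\ (forall x y, S y -> ip (x - P x) y = 0).

Definition refl_ginv (H G : V -> V) : Prop :=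
  (forall x, G (H (G x)) = G x) /\ (forall x, H (G (H x)) = H x).

Definition pert (H w : V -> V) (l : R) : V -> V := fun x => H x + l *: w x.

(* theta_max(w, lambda), given the projectors Pf l onto Ker (H0 + l w) *)
Definition theta_max (Pf : R -> V -> V) (l : R) : R :=
  asin (opnorm (fun x => Pf l x - Pf 0 x)).

End HilbertDefs.

(* Let t = λκ.  For x in Ker (H0 + λw), reflexivity of the generalized inverse
   gives x - G H0 x in Ker H0, and G H0 x = -λ G w x; hence every vector of the
   perturbed kernel lies within distance t ‖x‖ of Ker H0.  When the two kernels
   have the same finite dimension, P0 maps the perturbed kernel injectively,
   hence onto, Ker H0, which yields the reverse estimate
   ‖y - Pλ y‖² ≤ t²/(1 - t²) ‖y‖² on Ker H0.  Splitting
   (Pλ - P0) z = Pλ (z - P0 z) - (P0 z - Pλ P0 z) into orthogonal pieces gives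
   ‖Pλ - P0‖ ≤ t / √(1 - t²) ≤ t / √(1 - 2t).  The asymptotic bounds then
   follow from asin s ≤ s / √(1 - s²). *)

From HB Require Import structures.
From mathcomp Require Import all_boot all_order all_algebra.
From mathcomp Require Import all_classical all_reals all_analysis.
From mathcomp Require Import ring lra.
Set Implicit Arguments. Unset Strict Implicit. Unset Printing Implicit Defensive.
Import Order.TTheory GRing.Theory Num.Theory.
Import numFieldNormedType.Exports.
Local Open Scope classical_set_scope.
Local Open Scope ring_scope.

Section InnerProduct.
Variables (R : realType) (V : completeNormedModType R) (ip : V -> V -> R).
Hypothesis hip : inner_product_of_norm ip.

Lemma ipC x y : ip x y = ip y x.
Proof. by case: hip. Qed.

Lemma ip_norm x : ip x x = `|x| ^+ 2.
Proof. by case: hip. Qed.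

Lemma ipDl x y z : ip (x + y) z = ip x z + ip y z.
Proof. by case: hip => _ hlin _; have := hlin 1 x y z; rewrite scale1r mul1r. Qed.

Lemma ip0l z : ip 0 z = 0.
Proof. by apply: (addrI (ip 0 z)); rewrite -ipDl !addr0. Qed.

Lemma ipZl a x z : ip (a *: x) z = a * ip x z.
Proof. by case: hip => _ hlin _; rewrite -[a *: x]addr0 hlin ip0l addr0. Qed.

Lemma ipNl x z : ip (- x) z = - ip x z.
Proof. by rewrite -scaleN1r ipZl mulN1r. Qed.

Lemma ipBl x y z : ip (x - y) z = ip x z - ip y z.
Proof. by rewrite ipDl ipNl. Qed.

Lemma ipBr x y z : ip z (x - y) = ip z x - ip z y.
Proof. by rewrite !(ipC z) ipBl. Qed.

Lemma normD2 x y : `|x + y| ^+ 2 = `|x| ^+ 2 + 2 * ip x y + `|y| ^+ 2.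
Proof.
rewrite -!ip_norm ipDl (ipC x (x + y)) (ipC y (x + y)) !ipDl (ipC y x); ring.
Qed.

Lemma normB2 x y : `|x - y| ^+ 2 = `|x| ^+ 2 - 2 * ip x y + `|y| ^+ 2.
Proof. by rewrite normD2 normrN (ipC x) ipNl (ipC y) mulrN. Qed.

Lemma cauchy_schwarz x y : ip x y <= `|x| * `|y|.
Proof.
have [->|x0] := eqVneq x 0; first by rewrite ip0l normr0 mul0r.
have [->|y0] := eqVneq y 0; first by rewrite ipC ip0l normr0 mulr0.
have pxy : 0 < `|x| * `|y| by rewrite mulr_gt0 ?normr_gt0.
have := sqr_ge0 `| `|y| *: x - `|x| *: y |.
rewrite normB2 !normrZ !normr_id ipZl ipC ipZl ipC => h.
by rewrite -(ler_pM2l pxy); nra.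
Qed.

Lemma ip_eq0 x : ip x x = 0 -> x = 0.
Proof. by rewrite ip_norm => /eqP; rewrite sqrf_eq0 normr_eq0 => /eqP. Qed.

End InnerProduct.

Section LinearOperators.
Variables (R : realType) (V : completeNormedModType R).
Implicit Types (f : V -> V) (S : set V).

Lemma lin0 f : lin_op f -> f 0 = 0.
Proof.
move=> hf; apply: (addrI (f 0)); have := hf 1 0 0.
by rewrite !scale1r !addr0 => <-.
Qed.

Lemma linD f : lin_op f -> forall x y, f (x + y) = f x + f y.
Proof. by move=> hf x y; have := hf 1 x y; rewrite !scale1r. Qed.

Lemma linZ f : lin_op f -> forall a x, f (a *: x) = a *: f x.
Proof. by move=> hf a x; have := hf a x 0; rewrite !addr0 lin0 // addr0. Qed.

Lemma linB f : lin_op f -> forall x y, f (x - y) = f x - f y.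
Proof. by move=> hf x y; rewrite linD // -scaleN1r linZ // scaleN1r. Qed.

Lemma lin_sum f n (c : 'I_n -> R) (v : 'I_n -> V) : lin_op f ->
  f (\sum_(i < n) c i *: v i) = \sum_(i < n) c i *: f (v i).
Proof.
move=> hf; elim: n c v => [|n IH] c v; first by rewrite !big_ord0 lin0.
by rewrite !big_ord_recr /= linD // linZ // IH.
Qed.

Lemma lin_pert f g l : lin_op f -> lin_op g -> lin_op (pert f g l).
Proof.
move=> hf hg a x y; rewrite /pert hf hg scalerDr !scalerA (mulrC l a) -scalerA.
by rewrite scalerDr addrACA.
Qed.

Definition lin_subspace S := S 0 /\ forall a x y, S x -> S y -> S (a *: x + y).

Lemma lin_subspaceB S : lin_subspace S -> forall x y, S x -> S y -> S (x - y).
Proof. by move=> [_ hS] x y Sx Sy; rewrite addrC -scaleN1r; apply: hS. Qed.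

Lemma Ker_lin_subspace f : lin_op f -> lin_subspace (Ker f).
Proof.
move=> hf; split; first exact: lin0.
by move=> a x y; rewrite /Ker /= => fx fy; rewrite hf fx fy scaler0 addr0.
Qed.

(* [opnorm f] is a [sup]; when the image of the unit ball is unbounded it is
   the junk value [0], so nonnegativity needs no boundedness. *)
Lemma opnorm_ge0 f : 0 <= opnorm f.
Proof.
rewrite /opnorm.
have [hub|hub] := pselect (has_ubound [set `|f x| | x in [set x : V | `|x| <= 1]]).
  apply: le_trans (normr_ge0 (f 0)) (ub_le_sup hub _).
  by exists 0; rewrite //= normr0.
by rewrite sup_out // => -[].
Qed.

Lemma opnorm_le f M : (forall x, `|x| <= 1 -> `|f x| <= M) -> opnorm f <= M.
Proof.
move=> hM; apply: ge_sup => [|_ [x /hM hx <-] //].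
by exists `|f 0|, 0; rewrite //= normr0.
Qed.

Lemma opnorm_cst0 f : (forall x, f x = 0) -> opnorm f = 0.
Proof.
move=> f0; apply/le_anti; rewrite opnorm_ge0 andbT.
by apply: opnorm_le => x _; rewrite f0 normr0.
Qed.

Lemma opnorm_bound f : bounded_op f -> forall x, `|f x| <= opnorm f * `|x|.
Proof.
move=> [hf [M hM]] x.
have hub : has_ubound [set `|f x| | x in [set x : V | `|x| <= 1]].
  exists `|M| => _ [y /= y1 <-]; apply: le_trans (hM y) _.
  apply: le_trans (ler_wpM2r (normr_ge0 _) (ler_norm M)) _.
  by rewrite -[leRHS]mulr1 ler_wpM2l.
have [->|x0] := eqVneq x 0; first by rewrite lin0 // !normr0 mulr0.
have nx : 0 < `|x| by rewrite normr_gt0.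
have : `|f (`|x|^-1 *: x)| <= opnorm f.
  apply: (ub_le_sup hub); exists (`|x|^-1 *: x) => //=.
  by rewrite normrZ normfV normr_id mulVf // gt_eqF.
by rewrite linZ // normrZ normfV normr_id mulrC ler_pdivrMr.
Qed.

End LinearOperators.

Lemma refl_ginv_opnorm_gt0 (R : realType) (V : completeNormedModType R)
    (H G : V -> V) :
  bounded_op H -> bounded_op G -> refl_ginv H G -> opnorm H != 0 ->
  0 < opnorm G.
Proof.
move=> hH hG [_ hHGH] nH; rewrite lt_def opnorm_ge0 andbT.
apply: contra nH => /eqP G0; apply/eqP/opnorm_cst0 => x.
have GHx : G (H x) = 0.
  by apply/eqP; rewrite -normr_le0; have := opnorm_bound hG (H x); rewrite G0 mul0r.
by rewrite -hHGH GHx lin0 //; case: hH.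
Qed.

Section OrthogonalProjection.
Variables (R : realType) (V : completeNormedModType R) (ip : V -> V -> R).
Hypothesis hip : inner_product_of_norm ip.
Variables (S : set V) (P : V -> V).
Hypotheses (hS : lin_subspace S) (hP : orth_proj ip S P).

Lemma proj_ip z y : S y -> ip (P z) y = ip z y.
Proof.
move=> Sy; have := hP.2 z y Sy; rewrite (ipBl hip) => /eqP.
by rewrite subr_eq0 => /eqP.
Qed.

Lemma proj_pythagoras x : `|x| ^+ 2 = `|P x| ^+ 2 + `|x - P x| ^+ 2.
Proof.
rewrite -{1}(subrK (P x) x) addrC (normD2 hip (P x)) (ipC hip) (hP.2 x _ (hP.1 x)).
by rewrite mulr0 addr0.
Qed.

Lemma proj_dist_min x y : S y -> `|x - P x| ^+ 2 <= `|x - y| ^+ 2.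
Proof.
move=> Sy; have -> : x - y = (x - P x) + (P x - y) by rewrite addrA subrK.
rewrite (normD2 hip (x - P x)) hP.2; first by rewrite mulr0 addr0 lerDl sqr_ge0.
by apply: lin_subspaceB => //; apply: hP.1.
Qed.

Lemma proj_lin : lin_op P.
Proof.
move=> a x y; set d := P (a *: x + y) - (a *: P x + P y).
have Sd : S d.
  by apply: lin_subspaceB => //; [exact: hP.1 | apply: hS.2; exact: hP.1].
apply/eqP; rewrite -subr_eq0 -/d; apply/eqP/(ip_eq0 hip).
rewrite {1}/d (ipBl hip) (ipDl hip) (ipZl hip) !proj_ip // (ipDl hip) (ipZl hip).
by rewrite subrr.
Qed.

End OrthogonalProjection.

(* In coordinates [T] is a square matrix with trivial kernel, hence invertible. *)
Lemma has_dim_inj_surj (R : realType) (V : completeNormedModType R)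
    (T : V -> V) (K0 Kl : set V) n :
  lin_op T -> has_dim K0 n -> has_dim Kl n ->
  (forall x, Kl x -> K0 (T x)) -> (forall x, Kl x -> T x = 0 -> x = 0) ->
  forall y, K0 y -> exists x, Kl x /\ T x = y.
Proof.
move=> hT [b0 [_ E0]] [bl [indl El]] TK Tinj y K0y.
have Kl_bl i : Kl (bl i).
  rewrite El; exists (fun j => (j == i)%:R) => //.
  rewrite (bigD1 i) //= eqxx scale1r big1 ?addr0 // => j /negbTE ->.
  by rewrite scale0r.
have /choice [C HC] i : exists c : 'I_n -> R, T (bl i) = \sum_(j < n) c j *: b0 j.
  by have := TK _ (Kl_bl i); rewrite E0 => -[c _ <-]; exists c.
pose M : 'M[R]_n := \matrix_(i, j) C i j.
have TM (a : 'rV[R]_n) :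
    T (\sum_(i < n) a 0 i *: bl i) = \sum_(j < n) (a *m M) 0 j *: b0 j.
  rewrite lin_sum //; under eq_bigr => i _ do rewrite HC scaler_sumr.
  rewrite exchange_big /=; apply: eq_bigr => j _.
  by rewrite mxE scaler_suml; apply: eq_bigr => i _; rewrite scalerA mxE.
have M_inj (a : 'rV[R]_n) : a *m M = 0 -> a = 0.
  move=> aM0; have x0 : \sum_(i < n) a 0 i *: bl i = 0.
    apply: Tinj; first by rewrite El; exists (fun i => a 0 i).
    by rewrite TM aM0; apply: big1 => j _; rewrite mxE scale0r.
  by apply/matrixP => i j; rewrite (ord1 i) mxE; apply: indl x0 j.
have Mu : M \in unitmx.
  rewrite -row_free_unit -kermx_eq0; apply/eqP/row_matrixP => i.
  by rewrite row0; apply: M_inj; rewrite -row_mul mulmx_ker row0.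
move: K0y; rewrite E0 => -[e _ <-].
pose a := (\row_j e j) *m invmx M.
exists (\sum_(i < n) a 0 i *: bl i); split; first by rewrite El; exists (a 0).
by rewrite TM /a mulmxKV //; apply: eq_bigr => j _; rewrite mxE.
Qed.

Section ProjectionGap.
Variables (R : realType) (V : completeNormedModType R) (ip : V -> V -> R).
Hypothesis hip : inner_product_of_norm ip.
Variables (K0 Kl : set V) (B A : V -> V) (n : nat) (d : R).
Hypotheses (hK0 : lin_subspace K0) (hKl : lin_subspace Kl).
Hypotheses (dim0 : has_dim K0 n) (diml : has_dim Kl n).
Hypotheses (hB : orth_proj ip K0 B) (hA : orth_proj ip Kl A).
Hypotheses (d0 : 0 <= d) (d1 : d < 1).
Hypothesis gap : forall x, Kl x -> `|x - B x| <= d * `|x|.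

Let gap2 x : Kl x -> `|x - B x| ^+ 2 <= d ^+ 2 * `|x| ^+ 2.
Proof. by move=> Klx; rewrite -exprMn ler_sqr ?nnegrE ?mulr_ge0 // gap. Qed.

Let d2_gt0 : 0 < 1 - d ^+ 2.
Proof. by rewrite subr_gt0 expr_lt1. Qed.

Lemma proj_gap_compl z : `|A (z - B z)| <= d * `|z - B z|.
Proof.
set u := z - B z; set p := A u.
have pp : `|p| ^+ 2 = ip u p.
  have := hA.2 u p (hA.1 u); rewrite (ipBl hip) (ip_norm hip) => /eqP.
  by rewrite subr_eq0 => /eqP.
have up : ip u p = ip u (p - B p).
  by rewrite (ipBr hip) (hB.2 z _ (hB.1 p)) subr0.
have hp : `|p| ^+ 2 <= `|u| * (d * `|p|).
  rewrite pp up; apply: le_trans (cauchy_schwarz hip _ _) _.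
  by apply: ler_wpM2l; [exact: normr_ge0 | apply: gap; exact: hA.1].
have [->|p0] := eqVneq `|p| 0; first by rewrite mulr_ge0.
have ppos : 0 < `|p| by rewrite lt_def p0 normr_ge0.
by rewrite -(ler_pM2r ppos); move: hp; rewrite expr2; lra.
Qed.

(* B restricted to Kl is injective since it moves vectors by at most d < 1
   times their norm; by equality of dimensions it is onto K0. *)
Lemma proj_gap_rev y : K0 y ->
  `|y - A y| ^+ 2 <= d ^+ 2 / (1 - d ^+ 2) * `|y| ^+ 2.
Proof.
move=> K0y.
have B_inj x : Kl x -> B x = 0 -> x = 0.
  move=> Klx Bx0; apply/eqP; rewrite -normr_le0 -(@pmulr_rle0 _ (1 - d)) ?subr_gt0 //.
  by have := gap Klx; rewrite Bx0 subr0; lra.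
have [x [Klx <-]] := has_dim_inj_surj (proj_lin hip hK0 hB) dim0 diml
  (fun x _ => hB.1 x) B_inj K0y.
have best := proj_dist_min hip hKl hA (B x) Klx.
rewrite (distrC (B x) x) in best.
have pyth := proj_pythagoras hip hB x.
have xB : `|x| ^+ 2 <= `|B x| ^+ 2 / (1 - d ^+ 2).
  by rewrite ler_pdivlMr //; have := gap2 Klx; lra.
apply: le_trans best _; apply: le_trans (gap2 Klx) _.
by rewrite -mulrA; apply: ler_wpM2l; [exact: sqr_ge0 | rewrite mulrC].
Qed.

Lemma opnorm_proj_gap : opnorm (fun z => A z - B z) <= d / Num.sqrt (1 - d ^+ 2).
Proof.
have hAl := proj_lin hip hKl hA.
apply: opnorm_le => z z1.
have -> : A z - B z = A (z - B z) - (B z - A (B z)).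
  by rewrite (linB hAl) opprB addrA subrK.
rewrite -ler_sqr ?nnegrE ?divr_ge0 ?sqrtr_ge0 //.
rewrite expr_div_n sqr_sqrtr ?(ltW d2_gt0) // (normB2 hip) (ipC hip).
rewrite (hA.2 (B z) _ (hA.1 _)) mulr0 subr0.
have gapA : `|A (z - B z)| ^+ 2 <= d ^+ 2 * `|z - B z| ^+ 2.
  by rewrite -exprMn ler_sqr ?nnegrE ?mulr_ge0 // proj_gap_compl.
have gapB := proj_gap_rev (hB.1 z).
have pyth := proj_pythagoras hip hB z.
have z2 : `|z| ^+ 2 <= 1 by rewrite expr_le1.
set k := d ^+ 2 / (1 - d ^+ 2) in gapB *.
have k0 : 0 <= k by rewrite divr_ge0 ?sqr_ge0 ?ltW.
have dk : d ^+ 2 <= k by rewrite ler_pdivlMr // ler_piMr ?sqr_ge0 // lerBlDr lerDl sqr_ge0.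
apply: le_trans (_ : _ <= k * `|z| ^+ 2) _; last first.
  by rewrite -[leRHS]mulr1 ler_wpM2l.
rewrite pyth mulrDr; have := ler_wpM2r (sqr_ge0 `|z - B z|) dk; lra.
Qed.

End ProjectionGap.

Section PerturbedKernel.
Variables (R : realType) (V : completeNormedModType R) (ip : V -> V -> R).
Hypothesis hip : inner_product_of_norm ip.
Variables (H0 G w : V -> V).
Hypotheses (hH0 : bounded_op H0) (hG : bounded_op G) (hGi : refl_ginv H0 G).
Hypothesis hw : bounded_op w.

Lemma ker_pert_dist_ker P0 l x : orth_proj ip (Ker H0) P0 -> 0 <= l ->
  pert H0 w l x = 0 -> `|x - P0 x| <= l * (opnorm G * opnorm w) * `|x|.
Proof.
move=> hP0 l0 /eqP; rewrite addr_eq0 => /eqP H0x.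
have K0x : Ker H0 (x - G (H0 x)) by rewrite /Ker /= (linB hH0.1) hGi.2 subrr.
have := proj_dist_min hip (Ker_lin_subspace hH0.1) hP0 x K0x.
rewrite opprB addrCA subrr addr0 ler_sqr ?nnegrE // => /le_trans; apply.
apply: le_trans (opnorm_bound hG _) _.
rewrite H0x normrN normrZ ger0_norm // mulrCA -!mulrA.
apply: ler_wpM2l => //; apply: ler_wpM2l; [exact: opnorm_ge0 | exact: opnorm_bound].
Qed.

Lemma opnorm_pert_proj_gap P0 Pl l :
  orth_proj ip (Ker H0) P0 -> orth_proj ip (Ker (pert H0 w l)) Pl ->
  same_dim (Ker (pert H0 w l)) (Ker H0) ->
  0 <= l -> l * (opnorm G * opnorm w) < 1 ->
  opnorm (fun x => Pl x - P0 x) <=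
    l * (opnorm G * opnorm w) / Num.sqrt (1 - (l * (opnorm G * opnorm w)) ^+ 2).
Proof.
move=> hP0 hPl [n [diml dim0]] l0 t1.
apply: (opnorm_proj_gap hip (Ker_lin_subspace hH0.1)
  (Ker_lin_subspace (lin_pert l hH0.1 hw.1)) dim0 diml hP0 hPl) => //.
  by rewrite !mulr_ge0 ?opnorm_ge0.
by move=> x; apply: ker_pert_dist_ker.
Qed.

End PerturbedKernel.

Lemma div_sqrt_le (R : realType) (t : R) : 0 <= t -> 2 * t < 1 ->
  t / Num.sqrt (1 - t ^+ 2) <= t / Num.sqrt (1 - 2 * t).
Proof.
move=> t0 t2; apply: ler_wpM2l => //.
have c0 : 0 < 1 - 2 * t by lra.
rewrite lef_pV2 ?posrE ?sqrtr_gt0 //; last by rewrite subr_gt0 expr_lt1 //; lra.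
by rewrite ler_sqrt; nra.
Qed.

Lemma pert_ker_proj_bound (R : realType) (V : completeNormedModType R)
    (ip : V -> V -> R) (H0 G w P0 Pl : V -> V) (l : R) :
  inner_product_of_norm ip -> bounded_op H0 -> opnorm H0 = 1 ->
  bounded_op G -> refl_ginv H0 G -> bounded_op w -> opnorm w = 1 ->
  0 <= l -> l < 1 / (2 * (opnorm H0 * opnorm G)) ->
  same_dim (Ker (pert H0 w l)) (Ker H0) ->
  orth_proj ip (Ker H0) P0 -> orth_proj ip (Ker (pert H0 w l)) Pl ->
  opnorm (fun x => Pl x - P0 x) <=
    l * (opnorm H0 * opnorm G) / Num.sqrt (1 - 2 * l * (opnorm H0 * opnorm G)).
Proof.
move=> hip hH0 nH0 hG hGi hw nw l0 lk sd hP0 hPl.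
have g0 : 0 < opnorm G by apply: refl_ginv_opnorm_gt0 hH0 hG hGi _; rewrite nH0.
rewrite nH0 !mul1r in lk *.
have t2 : 2 * (l * opnorm G) < 1.
  by move: lk; rewrite -div1r ltr_pdivlMr ?mulr_gt0 // mulrCA.
rewrite -[2 * l * _]mulrA.
apply: le_trans (div_sqrt_le (mulr_ge0 l0 (ltW g0)) t2).
have := opnorm_pert_proj_gap hip hH0 hG hGi hw hP0 hPl sd l0.
by rewrite nw mulr1; apply; lra.
Qed.

Lemma pert_ker_proj_bound_near (R : realType) (V : completeNormedModType R)
    (ip : V -> V -> R) (H0 G w : V -> V) (Pf : R -> V -> V) :
  inner_product_of_norm ip -> bounded_op H0 -> opnorm H0 = 1 ->
  bounded_op G -> refl_ginv H0 G -> bounded_op w -> opnorm w = 1 ->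
  (forall l, orth_proj ip (Ker (pert H0 w l)) (Pf l)) ->
  (\forall l \near 0^'+, same_dim (Ker (pert H0 w l)) (Ker H0)) ->
  \forall l \near 0^'+, opnorm (fun x => Pf l x - Pf 0 x) <=
    l * (opnorm H0 * opnorm G) / Num.sqrt (1 - 2 * l * (opnorm H0 * opnorm G)).
Proof.
move=> hip hH0 nH0 hG hGi hw nw hPf sd.
have k0 : 0 < opnorm H0 * opnorm G.
  by rewrite nH0 mul1r; apply: refl_ginv_opnorm_gt0 hH0 hG hGi _; rewrite nH0.
have pert0 : pert H0 w 0 = H0 by apply/funext => x; rewrite /pert scale0r addr0.
have hP0 := hPf 0; rewrite pert0 in hP0.
near=> l; apply: (pert_ker_proj_bound hip hH0 nH0 hG hGi hw nw _ _ _ hP0 (hPf l)).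
- by apply: ltW; near: l; exact: nbhs_right_gt.
- by near: l; apply: nbhs_right_lt; rewrite divr_gt0 // mulr_gt0.
- by near: l.
Unshelve. all: by end_near.
Qed.

Lemma atan_le_id (R : realType) (y : R) : 0 <= y -> atan y <= y.
Proof.
rewrite le_eqVlt => /predU1P[<-|y0]; first by rewrite atan0.
have datan z : z \in `]0, y[ -> is_derive z 1 atan (1 + z ^+ 2)^-1.
  by move=> _; exact: is_derive1_atan.
have catan : {within `[0, y], continuous atan}.
  by apply: derivable_within_continuous => z _; exact: ex_derive.
have [c _] := MVT y0 datan catan; rewrite atan0 !subr0 => ->.
rewrite ler_pdivrMl ?ltr_wpDr ?sqr_ge0 //; have := sqr_ge0 c; nra.
Qed.

Lemma asin_le_div_sqrt (R : realType) (s : R) : 0 <= s -> s < 1 ->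
  asin s <= s / Num.sqrt (1 - s ^+ 2).
Proof.
move=> s0 s1.
have sI : -1 <= s <= 1 by rewrite (le_trans _ s0) ?lerN10 // ltW.
have th1 : asin s \in `](- (pi / 2)), (pi / 2)[.
  rewrite in_itv /= asin_ltpi2 ?andbT; last by rewrite (le_trans _ s0) ?lerN10.
  by rewrite asin_gtNpi2 // (lt_le_trans _ s0) ?ltrN10 // ltW.
rewrite -(tanK th1) /tan asinK; last by rewrite in_itv.
by rewrite cos_asin //; apply: atan_le_id; rewrite divr_ge0 // sqrtr_ge0.
Qed.

(* The bound [t / √(1 - 2t)] on [sin θ] turns into a bound on [θ] that is
   rational in [t], which makes its limit at [0] easy to compute. *)
Lemma asin_le_pert (R : realType) (s t : R) : 0 <= s -> 0 <= t ->
  t * (2 + t) < 1 -> s <= t / Num.sqrt (1 - 2 * t) ->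
  asin s <= t / (1 - t * (2 + t)).
Proof.
move=> s0 t0 tt hs.
have c0 : 0 < 1 - 2 * t by have := sqr_ge0 t; nra.
have u0 : 0 < 1 - t * (2 + t) by lra.
have hs2 : s ^+ 2 * (1 - 2 * t) <= t ^+ 2.
  move: hs; rewrite -ler_sqr ?nnegrE ?divr_ge0 ?sqrtr_ge0 //.
  by rewrite expr_div_n sqr_sqrtr ?(ltW c0) // ler_pdivlMr.
have s1 : s < 1 by nra.
have ss : 0 < 1 - s ^+ 2 by rewrite subr_gt0 expr_lt1.
apply: le_trans (asin_le_div_sqrt s0 s1) _.
rewrite -ler_sqr ?nnegrE ?divr_ge0 ?sqrtr_ge0 ?(ltW u0) //.
rewrite !expr_div_n sqr_sqrtr ?(ltW ss) // ler_pdivrMr // mulrAC ler_pdivlMr ?exprn_gt0 //.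
have h1 : s ^+ 2 * (1 - t * (2 + t)) <= t ^+ 2 * (1 - s ^+ 2) by lra.
have h2 : s ^+ 2 * (1 - t * (2 + t)) ^+ 2 <= s ^+ 2 * (1 - t * (2 + t)).
  by rewrite expr2 mulrA ler_piMr ?mulr_ge0 ?sqr_ge0 ?(ltW u0) //; nra.
lra.
Qed.

Lemma pert_bound_cvg (R : realType) (k : R) :
  (fun l => k / (1 - l * k * (2 + l * k))) @ 0^'+ --> k.
Proof.
have u1 : 1 - l * k * (2 + l * k) @[l --> (0:R)] --> 1 - 0 * k * (2 + 0 * k).
  apply: cvgB; first exact: cvg_cst.
  by apply: cvgM; [|apply: cvgD; first exact: cvg_cst]; apply: cvgMr_tmp; exact: cvg_id.
rewrite !mul0r subr0 in u1.
apply: cvg_at_right_filter.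
have {4}-> : k = k / 1 by rewrite divr1.
by apply: cvgMl_tmp; exact: cvgV.
Qed.

Lemma theta_max0 (R : realType) (V : completeNormedModType R) (Pf : R -> V -> V) :
  theta_max Pf 0 = 0.
Proof.
rewrite /theta_max opnorm_cst0 => [|x]; last by rewrite subrr.
have hp : 0 <= pi / 2 :> R by rewrite divr_ge0 // pi_ge0.
by rewrite -{1}sin0 sinK // in_itv /= oppr_le0 hp.
Qed.

Section ThetaLimit.
Variables (R : realType) (V : completeNormedModType R) (Pf : R -> V -> V) (k : R).
Hypothesis k0 : 0 < k.
Hypothesis bound : \forall l \near 0^'+,
  opnorm (fun x => Pf l x - Pf 0 x) <= l * k / Num.sqrt (1 - 2 * l * k).

Lemma theta_max_ratio_bound :
  \forall l \near 0^'+, theta_max Pf l / l <= k / (1 - l * k * (2 + l * k)).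
Proof.
near=> l.
have l0 : 0 < l by near: l; exact: nbhs_right_gt.
have lk0 : 0 <= l * k by rewrite mulr_ge0 // ltW.
have lk : l * k < 1 / 4.
  by rewrite -ltr_pdivlMr //; near: l; apply: nbhs_right_lt; rewrite divr_gt0.
have hs : opnorm (fun x => Pf l x - Pf 0 x) <= l * k / Num.sqrt (1 - 2 * (l * k)).
  by rewrite mulrA; near: l; exact: bound.
rewrite /theta_max ler_pdivrMr // mulrAC [k * l]mulrC.
by apply: asin_le_pert hs; [exact: opnorm_ge0 | | nra].
Unshelve. all: by end_near.
Qed.

Lemma theta_max_limsup eps : 0 < eps ->
  \forall l \near 0^'+, theta_max Pf l / l <= k + eps.
Proof.
move=> e0; near=> l.
apply: le_trans (_ : _ <= k / (1 - l * k * (2 + l * k))) _.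
  by near: l; exact: theta_max_ratio_bound.
by near: l; apply: cvgr_le (@pert_bound_cvg _ k) _ _; rewrite ltrDl.
Unshelve. all: by end_near.
Qed.

Lemma theta_max_sensitivity_le X :
  (fun l => (theta_max Pf l - theta_max Pf 0) / l) @ 0^'+ --> X -> X <= k.
Proof.
move=> hX; apply: ler_cvg_to hX (@pert_bound_cvg _ k) _.
by apply: filterS theta_max_ratio_bound => l; rewrite theta_max0 subr0.
Qed.

End ThetaLimit.

Theorem mainTheorem15 (R : realType) (V : completeNormedModType R)
  (ip : V -> V -> R) (H0 G : V -> V) :
  inner_product_of_norm ip ->
  bounded_op H0 -> opnorm H0 = 1 -> finite_dim (Ker H0) ->
  bounded_op G -> refl_ginv H0 G ->
  let kappa := opnorm H0 * opnorm G in
  (forall (w : V -> V) (l : R) (P0 Pl : V -> V),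
     bounded_op w -> opnorm w = 1 ->
     0 <= l -> l < 1 / (2 * kappa) ->
     same_dim (Ker (pert H0 w l)) (Ker H0) ->
     orth_proj ip (Ker H0) P0 -> orth_proj ip (Ker (pert H0 w l)) Pl ->
     opnorm (fun x => Pl x - P0 x) <= l * kappa / Num.sqrt (1 - 2 * l * kappa))
  /\
  (forall (w : V -> V) (Pf : R -> V -> V),
     bounded_op w -> opnorm w = 1 ->
     (forall l, orth_proj ip (Ker (pert H0 w l)) (Pf l)) ->
     (\forall l \near 0^'+, same_dim (Ker (pert H0 w l)) (Ker H0)) ->
     (forall eps : R, 0 < eps ->
        \forall l \near 0^'+, theta_max Pf l / l <= kappa + eps) /\
     (forall X : R,
        (fun l => (theta_max Pf l - theta_max Pf 0) / l) @ 0^'+ --> X ->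
        X <= kappa))
  /\
  (forall (C : set (V -> V)) (Pf : (V -> V) -> R -> V -> V)
          (Xw : (V -> V) -> R),
     (forall w, C w -> bounded_op w) ->
     (forall w, C w -> opnorm w = 1 ->
        (forall l, orth_proj ip (Ker (pert H0 w l)) (Pf w l)) /\
        (\forall l \near 0^'+, same_dim (Ker (pert H0 w l)) (Ker H0)) /\
        (fun l => (theta_max (Pf w) l - theta_max (Pf w) 0) / l) @ 0^'+ --> Xw w) ->
     sup [set Xw w | w in [set w | C w /\ opnorm w = 1]] <= kappa).
Proof.
move=> hip hH0 nH0 _ hG hGi kappa.
have k0 : 0 < kappa.
  by rewrite /kappa nH0 mul1r; apply: refl_ginv_opnorm_gt0 hH0 hG hGi _; rewrite nH0.
have near_bound := pert_ker_proj_bound_near hip hH0 nH0 hG hGi.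
split; first by move=> w l P0 Pl; apply: pert_ker_proj_bound.
split.
  move=> w Pf hw nw hPf sd; have hb := near_bound w Pf hw nw hPf sd.
  by split => [eps|X]; [exact: theta_max_limsup | exact: theta_max_sensitivity_le].
move=> C Pf Xw hC hCw.
have [[w0 [Cw0 nw0]]|no] := pselect (exists w, C w /\ opnorm w = 1).
  apply: ge_sup; first by exists (Xw w0), w0.
  move=> _ [w [Cw nw] <-]; have [hPf [sd hX]] := hCw w Cw nw.
  exact: theta_max_sensitivity_le k0 (near_bound w (Pf w) (hC w Cw) nw hPf sd) _ hX.
rewrite (_ : [set _ | _ in _] = set0) ?sup0 ?ltW //.
by apply/seteqP; split => // y [w hw _]; apply: no; exists w.
Qed.
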